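(* For any $n\geq 1$ and any formulas $\psi_1,\dots,\psi_n$, $\mathbf{GLP}\nvdash\bigwedge_{i=1}^n([0]\psi_i\to\psi_i)\to\langle 0\rangle^{n+1}\top$.
   Context: $\mathbf{GLP}$ is the propositional polymodal logic with modalities $[0],[1],\dots$ ($\langle k\rangle:=\neg[k]\neg$) axiomatized by classical tautologies; $[k](\phi\to\psi)\to([k]\phi\to[k]\psi)$; $[k]([k]\phi\to\phi)\to[k]\phi$; $\langle j\rangle\phi\to[k]\langle j\rangle\phi$ for $j<k$; $[j]\phi\to[k]\phi$ for $j\leq k$; rules modus ponens and necessitation. $\langle 0\rangle^{n+1}$ denotes $n+1$ iterations of $\langle 0\rangle$. *)

From Stdlib Require Import List Arith.

Inductive form : Type :=
| Var : nat -> form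
| Bot : form
| Imp : form -> form -> form
| Box : nat -> form -> form.

Definition Neg (p : form) : form := Imp p Bot.
Definition Top : form := Neg Bot.
Definition Or (p q : form) : form := Imp (Neg p) q.
Definition And (p q : form) : form := Neg (Imp p (Neg q)).
Definition Dia (k : nat) (p : form) : form := Neg (Box k (Neg p)).

Fixpoint Dia_iter (k m : nat) (p : form) : form :=
  match m with
  | 0 => p
  | S m' => Dia k (Dia_iter k m' p)
  end.

Fixpoint subst (s : nat -> form) (p : form) : form :=
  match p with
  | Var i => s i
  | Bot => Bot
  | Imp a b => Imp (subst s a) (subst s b)
  | Box k a => Box k (subst s a)
  end.

Fixpoint peval (v : form -> bool) (p : form) : bool :=
  match p with
  | Var _ => v p
  | Bot => false
  | Imp a b => implb (peval v a) (peval v b)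
  | Box _ _ => v p
  end.

(* A propositional tautology: true under every valuation of the
   propositional atoms (variables and boxed formulas treated as atoms).
   This yields exactly all substitution instances of classical tautologies. *)
Definition tautology (p : form) : Prop := forall v, peval v p = true.

Inductive GLP_prv : form -> Prop :=
| ax_taut p : tautology p -> GLP_prv p
| ax_K k p q : GLP_prv (Imp (Box k (Imp p q)) (Imp (Box k p) (Box k q)))
| ax_Lob k p : GLP_prv (Imp (Box k (Imp (Box k p) p)) (Box k p))
| ax_mono_dia j k p : j < k -> GLP_prv (Imp (Dia j p) (Box k (Dia j p)))
| ax_mono_box j k p : j <= k -> GLP_prv (Imp (Box j p) (Box k p))
| r_mp p q : GLP_prv (Imp p q) -> GLP_prv p -> GLP_prv q
| r_nec k p : GLP_prv p -> GLP_prv (Box k p).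

Definition BigAnd (l : list form) : form := fold_right And Top l.

From Stdlib Require Import List Arith Lia Bool.

(* Interpret GLP in the Kripke model on the natural numbers in which [0] looks
   at all smaller numbers and every [k] with k > 0 has no successors.  The
   relation > is transitive and conversely well-founded, so GLP is sound for it.
   There the reflection principle [0]psi -> psi fails only at the least world
   refuting psi, so n reflection principles can fail at no more than n of the
   worlds 0, ..., n: some world among them validates all of them, while
   <0>^(n+1) T holds only at worlds >= n+1. *)

Fixpoint sat (p : form) (x : nat) : bool :=
  match p with
  | Var _ | Bot => false
  | Imp a b => implb (sat a x) (sat b x)
  | Box 0 a => forallb (sat a) (seq 0 x)
  | Box (S _) _ => true
  end.

Lemma sat_Imp a b x : sat (Imp a b) x = true <-> (sat a x = true -> sat b x = true).
Proof. apply implb_true_iff. Qed.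

Lemma sat_Box0 a x : sat (Box 0 a) x = true <-> forall y, y < x -> sat a y = true.
Proof.
  simpl; rewrite forallb_forall; split; intros H y Hy.
  - apply H, in_seq; lia.
  - apply in_seq in Hy; apply H; lia.
Qed.

Lemma sat_Dia0 a x : sat (Dia 0 a) x = true -> exists y, y < x /\ sat a y = true.
Proof.
  unfold Dia, Neg; simpl; rewrite implb_false_r, negb_true_iff.
  intros Hbox; apply not_true_iff_false in Hbox.
  destruct (existsb (sat a) (seq 0 x)) eqn:Hex.
  - apply existsb_exists in Hex as [y [Hy Hay]].
    apply in_seq in Hy; exists y; split; [lia | exact Hay].
  - exfalso; apply Hbox, forallb_forall; intros y Hy.
    rewrite implb_false_r, negb_true_iff; apply not_true_iff_false; intro Hay.
    assert (existsb (sat a) (seq 0 x) = true) by (apply existsb_exists; eauto).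
    congruence.
Qed.

Lemma sat_Dia0_iter m p x : sat (Dia_iter 0 m p) x = true -> m <= x.
Proof.
  revert x; induction m as [|m IH]; intros x Hx; [lia|].
  destruct (sat_Dia0 _ _ Hx) as [y [Hyx Hy]].
  apply IH in Hy; lia.
Qed.

Lemma sat_BigAnd L x : (forall f, In f L -> sat f x = true) -> sat (BigAnd L) x = true.
Proof.
  induction L as [|f L IH]; intros H; [reflexivity|].
  simpl; rewrite (H f (or_introl eq_refl)), IH; [reflexivity|].
  intros g Hg; apply H; right; exact Hg.
Qed.

Lemma peval_sat x p : peval (fun q => sat q x) p = sat p x.
Proof. induction p; simpl; congruence. Qed.

Lemma sat_Lob0 p x :
  (forall y, y < x -> (forall z, z < y -> sat p z = true) -> sat p y = true) ->
  forall y, y < x -> sat p y = true.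
Proof.
  intros Hstep y; induction y as [y IH] using lt_wf_ind; intros Hyx.
  apply Hstep; [exact Hyx|]; intros z Hzy; apply IH; lia.
Qed.

Lemma GLP_sound p : GLP_prv p -> forall x, sat p x = true.
Proof.
  induction 1 as [p Htaut | k p q | k p | j k p Hjk | j k p Hjk
                 | p q _ IHpq _ IHp | k p _ IHp]; intro x.
  - rewrite <- (peval_sat x); apply Htaut.
  - destruct k; [|reflexivity].
    rewrite !sat_Imp, !sat_Box0; intros Hpq Hp y Hy.
    apply (proj1 (sat_Imp _ _ _) (Hpq y Hy)), Hp, Hy.
  - destruct k; [|reflexivity].
    rewrite sat_Imp, !sat_Box0; intros Hlob; apply sat_Lob0; intros y Hy Hbelow.
    apply (proj1 (sat_Imp _ _ _) (Hlob y Hy)), sat_Box0, Hbelow.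
  - destruct k; [lia|]; apply implb_true_r.
  - destruct k; [|apply implb_true_r].
    replace j with 0 by lia; apply sat_Imp; trivial.
  - exact (proj1 (sat_Imp _ _ _) (IHpq x) (IHp x)).
  - destruct k; [|reflexivity]; apply sat_Box0; auto.
Qed.

Lemma reflection_fails_once f x y :
  sat (Imp (Box 0 f) f) x = false -> sat (Imp (Box 0 f) f) y = false -> x = y.
Proof.
  intros Hx Hy.
  destruct (proj1 (implb_false_iff (sat (Box 0 f) x) (sat f x)) Hx) as [Hbx Hfx].
  destruct (proj1 (implb_false_iff (sat (Box 0 f) y) (sat f y)) Hy) as [Hby Hfy].
  rewrite sat_Box0 in Hbx, Hby.
  destruct (Nat.lt_trichotomy x y) as [Hxy | [Hxy | Hyx]]; [| exact Hxy |].
  - rewrite Hby in Hfx by exact Hxy; discriminate.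
  - rewrite Hbx in Hfy by exact Hyx; discriminate.
Qed.

Lemma length_filter_fails_once {A : Type} (p : A -> bool) (W : list A) :
  NoDup W -> (forall x y, p x = false -> p y = false -> x = y) ->
  length W <= S (length (filter p W)).
Proof.
  intros Hnodup Honce; induction Hnodup as [|a W Ha _ IH]; simpl; [lia|].
  destruct (p a) eqn:Hpa; simpl; [lia|].
  rewrite (forallb_filter_id p W); [lia|].
  apply forallb_forall; intros x Hx; apply not_false_iff_true; intro Hpx.
  apply Ha; rewrite (Honce a x Hpa Hpx); exact Hx.
Qed.

Lemma exists_good_for_all {I A : Type} (good : I -> A -> bool) (L : list I) (W : list A) :
  NoDup W -> (forall i x y, good i x = false -> good i y = false -> x = y) ->
  length L < length W -> exists x, In x W /\ forall i, In i L -> good i x = true.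
Proof.
  intros Hnodup Honce; revert W Hnodup.
  induction L as [|i L IH]; intros W Hnodup Hlen.
  - destruct W as [|x W]; [simpl in Hlen; lia|].
    exists x; split; [left; reflexivity | intros i []].
  - destruct (IH (filter (good i) W)) as [x [HxW Hx]].
    + apply NoDup_filter, Hnodup.
    + pose proof (length_filter_fails_once (good i) W Hnodup (Honce i)).
      simpl in Hlen; lia.
    + apply filter_In in HxW as [HxW Hix].
      exists x; split; [exact HxW|]; intros j [<- | Hj]; auto.
Qed.

Theorem mainTheorem13 (n : nat) (psi : nat -> form) :
  1 <= n ->
  ~ GLP_prv
      (Imp (BigAnd (map (fun i => Imp (Box 0 (psi i)) (psi i)) (seq 1 n)))
           (Dia_iter 0 (S n) Top)).
Proof.
  intros _ Hprv. (* the argument does not need n >= 1 *)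
  destruct (exists_good_for_all (fun i => sat (Imp (Box 0 (psi i)) (psi i)))
              (seq 1 n) (seq 0 (S n))) as [m [Hm Hrefl]].
  - apply seq_NoDup.
  - intro i; apply reflection_fails_once.
  - rewrite !length_seq; lia.
  - apply in_seq in Hm.
    assert (Hdepth : S n <= m); [|lia].
    apply (sat_Dia0_iter _ Top), (proj1 (sat_Imp _ _ _) (GLP_sound _ Hprv m)).
    apply sat_BigAnd; intros f Hf.
    apply in_map_iff in Hf as [i [<- Hi]]; auto.
Qed.
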